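(* Let $A$ be a finite alphabet, $E\subseteq W(A)$ and $\vec s\in V^\infty(A)$ such that $E$ is large in $\vec s$. Let $r\ge 2$ and $E=\bigcup_{i=1}^r E_i$. Then there exist $1\le i\le r$ and $\vec t\in V^\infty(A)$ with $\vec t\le\vec s$ such that $E_i$ is large in $\vec t$.
   Context: $\mathbb N=\{0,1,2,\dots\}$. Let $A$ be a finite nonempty alphabet. $W(A)$ denotes the set of all finite words over $A$, including the empty word; words are concatenated by juxtaposition. Fix a symbol $x\notin A$. A variable word over $A$ is a finite word over $A\cup\{x\}$ in which $x$ occurs at least once; $V(A)$ is the set of variable words. For $s(x)\in V(A)$ and $a\in A\cup\{x\}$, $s(a)$ is obtained by replacing every occurrence of $x$ by $a$. $V^\infty(A)$ is the set of infinite sequences of variable words. For a sequence $(s_n(x))_{n\in I}$ of variable words indexed by a set $I\subseteq\mathbb N$ that is either a finite interval or of the form $\{m,m+1,\dots\}$: the constant span $\langle (s_n(x))_{n\in I}\rangle_c$ is the set of all words $s_{l_0}(a_0)s_{l_1}(a_1)\cdots s_{l_j}(a_j)$ with $j\ge 0$, $l_0<\dots<l_j$ in $I$ and $a_0,\dots,a_j\in A$; the variable span $\langle (s_n(x))_{n\in I}\rangle_v$ is the set of all words $s_{l_0}(a_0)\cdots s_{l_j}(a_j)$ with $j\ge0$, $l_0<\dots<l_j$ in $I$, $a_0,\dots,a_j\in A\cup\{x\}$ and at least one $a_i=x$. Extracted subsequences: let $\vec s=(s_n(x))_{n=0}^\infty\in V^\infty(A)$. A finite sequence $(t_n(x))_{n=0}^l$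 of variable words is an extracted subsequence of $\vec s$ if there exist integers $0=m_0<m_1<\dots<m_{l+1}$ with $t_i(x)\in\langle (s_n(x))_{n=m_i}^{m_{i+1}-1}\rangle_v$ for all $0\le i\le l$. An infinite sequence $\vec t=(t_n(x))_{n=0}^\infty$ is an extracted subsequence of $\vec s$ if every initial segment $(t_n(x))_{n=0}^l$ is a finite extracted subsequence of $\vec s$. We write $\vec t\le\vec s$. A set $E\subseteq W(A)$ is large in $\vec s\in V^\infty(A)$ if $E\cap\langle\vec w\rangle_c\neq\emptyset$ for every infinite extracted subsequence $\vec w$ of $\vec s$. *)

From mathcomp Require Import all_boot.
Set Implicit Arguments. Unset Strict Implicit. Unset Printing Implicit Defensive.

(* Letters of A ∪ {x}: [Some a] is the letter a, [None] is the variable x. *)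
Section Words.
Variable A : finType.

(* W(A) = seq A ; words over A ∪ {x} = seq (option A). *)
Definition is_vword (s : seq (option A)) : bool := None \in s.

(* Infinite sequences of words over A ∪ {x}; V^∞(A) is the subset of those
   whose terms are all variable words. *)
Definition vseq := nat -> seq (option A).
Definition is_vseq (s : vseq) : Prop := forall n, is_vword (s n).

Definition subst (s : seq (option A)) (b : option A) : seq (option A) :=
  map (fun c => if c is Some a then Some a else b) s.
Definition substA (s : seq (option A)) (a : A) : seq A :=
  map (fun c => odflt a c) s.

Definition in_vspan (s : vseq) (m n : nat) (w : seq (option A)) : Prop :=
  exists (ls : seq nat) (bs : seq (option A)),
    [/\ size ls = size bs, 0 < size ls, sorted ltn ls,
        all (fun l => m <= l < n) ls & None \in bs] /\
        w = flatten [seq subst (s p.1) p.2 | p <- zip ls bs].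

Definition in_cspan (s : vseq) (w : seq A) : Prop :=
  exists (ls : seq nat) (as_ : seq A),
    [/\ size ls = size as_, 0 < size ls, sorted ltn ls &
        w = flatten [seq substA (s p.1) p.2 | p <- zip ls as_]].

Definition extracted_fin (t s : vseq) (l : nat) : Prop :=
  exists m : nat -> nat,
    [/\ m 0 = 0,
        (forall i, i <= l -> m i < m i.+1) &
        (forall i, i <= l -> in_vspan s (m i) (m i.+1) (t i))].

Definition extracted (t s : vseq) : Prop := forall l, extracted_fin t s l.

Definition large (E : seq A -> Prop) (s : vseq) : Prop :=
  forall w : vseq, is_vseq w -> extracted w s ->
    exists u, E u /\ in_cspan w u.
End Words.

From mathcomp Require Import all_boot.
From Stdlib Require Classical ClassicalEpsilon.
Set Implicit Arguments. Unset Strict Implicit. Unset Printing Implicit Defensive.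

(* Suppose no E_i is large below s.  Refine s step by step: as
   E_1 is not large in s, some w_1 ≤ s has a constant span avoiding E_1; as
   E_2 is not large in w_1, some w_2 ≤ w_1 avoids E_2, and so on.  Since
   extraction is transitive and constant spans shrink under extraction, w_r
   lies below s and its constant span avoids all of E, against the largeness
   of E in s. *)

Lemma incr_homo_leq (f : nat -> nat) : (forall i, f i < f i.+1) -> {homo f : i j / i <= j}.
Proof. by move=> f_incr; apply: homo_leq leqnn leq_trans _ => i; exact: ltnW (f_incr i). Qed.

Section Spans.
Variable A : finType.
Implicit Types (s t w : vseq A) (ps qs : seq (nat * option A)).

Definition eval s ps : seq (option A) := flatten [seq subst (s p.1) p.2 | p <- ps].

Definition sorted_in (a b : nat) ps : bool :=
  sorted ltn (map fst ps) && all (fun p => a <= p.1 < b) ps.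

Definition fill (b c : option A) : option A := if c is Some a then Some a else b.

Definition relabel (b : option A) qs := [seq (q.1, fill b q.2) | q <- qs].

Lemma subst_subst (u : seq (option A)) b c : subst (subst u c) b = subst u (fill b c).
Proof. by rewrite /subst -map_comp; apply: eq_map => -[]. Qed.

Lemma subst_eval s qs b : subst (eval s qs) b = eval s (relabel b qs).
Proof.
rewrite /eval {1}/subst map_flatten -!map_comp; congr flatten.
by apply: eq_map => q /=; exact: subst_subst.
Qed.

Lemma eval_cat s ps qs : eval s (ps ++ qs) = eval s ps ++ eval s qs.
Proof. by rewrite /eval map_cat flatten_cat. Qed.

Lemma None_relabel b qs :
  (None \in map snd (relabel b qs)) = (b == None) && (None \in map snd qs).
Proof.
elim: qs => [|[l c] qs IH] /=; first by rewrite andbF.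
by rewrite !in_cons IH; case: b c {IH} => [b|] [c|]; rewrite /= ?orbF.
Qed.

Lemma sorted_in_relabel a b c qs : sorted_in a b (relabel c qs) = sorted_in a b qs.
Proof. by rewrite /sorted_in -map_comp all_map. Qed.

Lemma sorted_in_cons a b p ps :
  sorted_in a b (p :: ps) = (a <= p.1 < b) && sorted_in p.1.+1 b ps.
Proof.
rewrite /sorted_in /= (path_sortedE ltn_trans) all_map; apply/idP/idP.
- case/andP=> /andP[gt_p sorted_ps] /andP[-> all_ps]; rewrite sorted_ps /=.
  apply/allP=> q q_ps; have /= -> := allP gt_p q q_ps.
  by case/andP: (allP all_ps q q_ps).
- case/andP=> /andP[a_p p_b] /andP[sorted_ps all_ps].
  rewrite sorted_ps a_p p_b /= andbT; apply/andP; split.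
  + by apply: sub_all all_ps => q /andP[].
  + by apply: sub_all all_ps => q /andP[p_q ->]; rewrite (leq_trans a_p (ltnW p_q)).
Qed.

Lemma sorted_in_widen a b a' b' ps :
  a' <= a -> b <= b' -> sorted_in a b ps -> sorted_in a' b' ps.
Proof.
move=> a'_a b_b' /andP[sorted_ps all_ps]; rewrite /sorted_in sorted_ps.
apply: sub_all all_ps => q /andP[a_q q_b].
by rewrite (leq_trans a'_a a_q) (leq_trans q_b b_b').
Qed.

Lemma sorted_in_cat a b c ps qs :
  a <= b -> b <= c -> sorted_in a b ps -> sorted_in b c qs -> sorted_in a c (ps ++ qs).
Proof.
elim: ps a => [|p ps IH] a a_b b_c /=; first by move=> _; exact: sorted_in_widen.
rewrite !sorted_in_cons => /andP[/andP[a_p p_b] sorted_ps] sorted_qs.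
by rewrite a_p (leq_trans p_b b_c) (IH _ p_b b_c).
Qed.

Lemma sorted_in_bound a b c ps : b <= c -> sorted_in a b ps -> all (fun p => p.1 < c) ps.
Proof. by move=> b_c /andP[_]; apply: sub_all => q /andP[_ /leq_trans ->]. Qed.

Lemma vspanE s a b u :
  in_vspan s a b u <-> exists ps, [/\ sorted_in a b ps, None \in map snd ps & u = eval s ps].
Proof.
split.
- case=> ls [bs [[size_ls _ sorted_ls all_ls None_bs] ->]].
  have fst_zip : map fst (zip ls bs) = ls by apply: unzip1_zip; rewrite size_ls.
  have snd_zip : map snd (zip ls bs) = bs by apply: unzip2_zip; rewrite size_ls.
  exists (zip ls bs); split=> //; last by rewrite snd_zip.
  by rewrite /sorted_in fst_zip sorted_ls; move: all_ls; rewrite -{1}fst_zip all_map.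
- case=> ps [/andP[sorted_ps all_ps] None_ps ->].
  exists (map fst ps), (map snd ps); split; last by rewrite zip_unzip.
  by split; rewrite ?size_map ?all_map //; case: ps None_ps {sorted_ps all_ps}.
Qed.

Lemma substA_subst (u : seq (option A)) a : map Some (substA u a) = subst u (Some a).
Proof. by rewrite /substA /subst -map_comp; apply: eq_map => -[]. Qed.

Lemma eval_Some s ls as_ : size ls = size as_ ->
  map Some (flatten [seq substA (s p.1) p.2 | p <- zip ls as_]) =
  eval s (zip ls (map Some as_)).
Proof.
elim: ls as_ => [|l ls IH] [|a as_] //= [/IH eq_rest].
by rewrite map_cat substA_subst eq_rest.
Qed.

Lemma cspanE s u :
  in_cspan s u <-> exists n ps,
    [/\ sorted_in 0 n ps, ps != [::], None \notin map snd ps & map Some u = eval s ps].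
Proof.
split.
- case=> ls [as_ [size_ls ls_gt0 sorted_ls ->]].
  have fst_zip : map fst (zip ls (map Some as_)) = ls
    by apply: unzip1_zip; rewrite size_map size_ls.
  have snd_zip : map snd (zip ls (map Some as_)) = map Some as_
    by apply: unzip2_zip; rewrite size_map size_ls.
  exists (\max_(l <- ls) l).+1, (zip ls (map Some as_)); split.
  + rewrite /sorted_in fst_zip sorted_ls /=; apply/allP=> -[l c] /(map_f fst).
    by rewrite fst_zip /= => l_ls; rewrite ltnS; apply: leq_bigmax_seq.
  + by rewrite -size_eq0 size_zip size_map -size_ls minnn -lt0n.
  + by rewrite snd_zip; apply/mapP=> -[].
  + exact: eval_Some.
- case=> n [ps [/andP[sorted_ps _] + None_ps eq_u]].
  case: ps sorted_ps None_ps eq_u => [//|p ps'] sorted_ps None_ps eq_u _.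
  have [a0 _] : exists a0 : A, p.2 = Some a0.
    by move: None_ps; rewrite /= in_cons; case: p.2 => [a0 _|//]; exists a0.
  set ps := p :: ps' in sorted_ps None_ps eq_u.
  exists (map fst ps), [seq odflt a0 q.2 | q <- ps]; split; rewrite ?size_map //.
  apply: (inj_map Some_inj); rewrite eval_Some ?size_map // eq_u -map_comp zip_map.
  congr eval; symmetry; apply: map_id_in => -[l [c|]] q_ps //=.
  by move: None_ps; rewrite (map_f snd q_ps).
Qed.

Definition block s t (m : nat -> nat) (rep : nat -> seq (nat * option A)) (p : nat) : Prop :=
  [/\ sorted_in (m p) (m p.+1) (rep p), None \in map snd (rep p) & t p = eval s (rep p)].

Section Composition.
Variables (s t : vseq A) (m : nat -> nat) (rep : nat -> seq (nat * option A)) (N : nat).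
Hypothesis m_incr : forall i, m i < m i.+1.
Hypothesis t_blocks : forall p, p < N -> block s t m rep p.

Definition expand ps : seq (nat * option A) := flatten [seq relabel p.2 (rep p.1) | p <- ps].

Lemma eval_expand ps : all (fun p => p.1 < N) ps -> eval t ps = eval s (expand ps).
Proof.
elim: ps => [//|p ps IH] /andP[p_N ps_N].
rewrite /expand /= eval_cat -/(expand ps) -IH // -subst_eval.
by case: (t_blocks p_N) => _ _ <-.
Qed.

Lemma None_expand ps :
  all (fun p => p.1 < N) ps -> (None \in map snd (expand ps)) = (None \in map snd ps).
Proof.
elim: ps => [//|p ps IH] /andP[p_N ps_N].
rewrite /expand /= map_cat mem_cat -/(expand ps) None_relabel IH // in_cons eq_sym.
by case: (t_blocks p_N) => _ -> _; rewrite andbT.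
Qed.

Lemma expand_nil ps : all (fun p => p.1 < N) ps -> (expand ps == [::]) = (ps == [::]).
Proof.
case: ps => [//|p ps] /andP[p_N _]; rewrite /expand /=.
by have [_ + _] := t_blocks p_N; case: (rep p.1).
Qed.

Lemma sorted_in_expand a b ps :
  b <= N -> sorted_in a b ps -> sorted_in (m a) (m b) (expand ps).
Proof.
have m_mono := incr_homo_leq m_incr.
elim: ps a => [//|p ps IH] a b_N; rewrite sorted_in_cons => /andP[/andP[a_p p_b] sorted_ps].
rewrite /expand /= -/(expand ps).
apply: (sorted_in_cat (m_mono _ _ (leqW a_p)) (m_mono _ _ p_b) _ (IH _ b_N sorted_ps)).
apply: sorted_in_widen (m_mono _ _ a_p) (leqnn _) _.
by rewrite sorted_in_relabel; case: (t_blocks (leq_trans p_b b_N)).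
Qed.

End Composition.

Lemma extracted_finE t s K : extracted_fin t s K ->
  exists m (rep : nat -> seq (nat * option A)),
    [/\ m 0 = 0, forall i, m i < m i.+1 & forall p, p < K.+1 -> block s t m rep p].
Proof.
case=> m [m0 m_incr t_span].
(* m' agrees with m up to K.+1 and grows by one afterwards. *)
pose m' i := m (minn i K.+1) + (i - K.+1).
have m'E i : i <= K.+1 -> m' i = m i.
  by move=> i_K; rewrite /m' (minn_idPl i_K) (eqP i_K) addn0.
have [rep rep_blocks] : exists rep : nat -> seq (nat * option A),
    forall p, p < K.+1 -> block s t m' rep p.
  apply: (ClassicalEpsilon.choice (fun p q => p < K.+1 ->
    [/\ sorted_in (m' p) (m' p.+1) q, None \in map snd q & t p = eval s q])) => p.
  case: (ltnP p K.+1) => [p_K|]; last by exists [::].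
  have /vspanE [q q_span] := t_span p p_K.
  by exists q => _; rewrite (m'E p) ?(m'E p.+1) // ltnW.
exists m', rep; split=> //; first by rewrite m'E.
move=> i; case: (ltnP i K.+1) => i_K.
  by rewrite (m'E i) ?(m'E i.+1) // ?m_incr // ltnW.
rewrite /m' (minn_idPr i_K) (minn_idPr (leqW i_K)) ltn_add2l subSn //.
Qed.

Lemma extracted_finI t s K m (rep : nat -> seq (nat * option A)) :
  m 0 = 0 -> (forall i, m i < m i.+1) ->
  (forall p, p < K.+1 -> block s t m rep p) -> extracted_fin t s K.
Proof.
move=> m0 m_incr t_blocks; exists m; split=> // p p_K.
by case: (t_blocks p p_K) => *; apply/vspanE; exists (rep p).
Qed.

Lemma subst_None (u : seq (option A)) : subst u None = u.
Proof. by rewrite /subst -[RHS]map_id; apply: eq_map => -[]. Qed.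

Lemma extracted_refl s : extracted s s.
Proof.
move=> K; apply: (@extracted_finI _ _ _ id (fun p => [:: (p, None)])) => // p _.
by split; rewrite /sorted_in /= ?leqnn ?ltnSn ?inE // /eval /= cats0 subst_None.
Qed.

(* Extraction is transitive: expand the blocks of w over t into blocks of t
   over s. *)
Lemma extracted_trans w t s : extracted w t -> extracted t s -> extracted w s.
Proof.
move=> w_t t_s l.
have [m [rw [m0 m_incr w_blocks]]] := extracted_finE (w_t l).
have [m' [rt [m'0 m'_incr t_blocks]]] := extracted_finE (t_s (m l.+1)).
have m_mono := incr_homo_leq m_incr.
apply: (@extracted_finI _ _ _ (fun i => m' (m i)) (fun p => expand rt (rw p))).
- by rewrite m0.
- by move=> i; apply: (homo_ltn ltn_trans m'_incr).
- move=> p p_l; have [sorted_p None_p w_p] := w_blocks p p_l.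
  have p_N : m p.+1 <= (m l.+1).+1 := leqW (m_mono _ _ p_l).
  have rw_N := sorted_in_bound p_N sorted_p.
  split; first exact: (sorted_in_expand m'_incr t_blocks p_N sorted_p).
  + by rewrite (None_expand t_blocks rw_N).
  + by rewrite w_p (eval_expand t_blocks rw_N).
Qed.

Lemma cspan_extracted w t u : extracted w t -> in_cspan w u -> in_cspan t u.
Proof.
move=> w_t /cspanE [n [ps [sorted_ps ps_nil None_ps eq_u]]].
have [m [rep [m0 m_incr w_blocks]]] := extracted_finE (w_t n).
have ps_N := sorted_in_bound (leqnSn n) sorted_ps.
apply/cspanE; exists (m n), (expand rep ps); split.
- by rewrite -m0; exact: (sorted_in_expand m_incr w_blocks (leqnSn n) sorted_ps).
- by rewrite (expand_nil w_blocks ps_N).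
- by rewrite (None_expand w_blocks ps_N).
- by rewrite eq_u (eval_expand w_blocks ps_N).
Qed.

End Spans.

Section Largeness.
Variable A : finType.
Implicit Types (E : seq A -> Prop) (s t w : vseq A).

Lemma not_large E t : ~ large E t ->
  exists w, [/\ is_vseq w, extracted w t & forall u, E u -> ~ in_cspan w u].
Proof.
move=> not_large_E; apply: Classical_Prop.NNPP => no_w; apply: not_large_E => w w_v w_t.
apply: Classical_Prop.NNPP => no_u; apply: no_w; exists w; split=> // u E_u u_w.
by apply: no_u; exists u.
Qed.

Lemma large_avoid E (F : seq A -> Prop) s w : large E s -> extracted w s ->
  (forall u, F u -> ~ in_cspan w u) -> large (fun u => E u /\ ~ F u) w.
Proof.
move=> large_E w_s F_w v v_v v_w.
have [u [E_u u_v]] := large_E v v_v (extracted_trans v_w w_s).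
by exists u; split=> //; split=> // F_u; apply: F_w F_u (cspan_extracted v_w u_v).
Qed.

Lemma large_cover k (F : nat -> seq A -> Prop) E s :
  is_vseq s -> large E s -> (forall u, E u -> exists2 i, i < k & F i u) ->
  exists i t, [/\ i < k, is_vseq t, extracted t s & large (F i) t].
Proof.
elim: k E s => [|k IH] E s s_v large_E E_cover.
  have [u [E_u _]] := large_E s s_v (extracted_refl s).
  by case: (E_cover u E_u).
case: (Classical_Prop.classic (large (F k) s)) => [large_Fk|/not_large [w [w_v w_s Fk_w]]].
  by exists k, s; split=> //; exact: extracted_refl.
have [|i [t [i_k t_v t_w large_t]]] := IH _ w w_v (large_avoid large_E w_s Fk_w).
  move=> u [E_u not_Fk_u]; have [i] := E_cover u E_u.
  by rewrite ltnS leq_eqVlt => /predU1P[-> /not_Fk_u|i_k F_u] //; exists i.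
by exists i, t; split=> //; [exact: ltnW | exact: extracted_trans t_w w_s].
Qed.

End Largeness.

Theorem fact2p5 (A : finType) (HA : 0 < #|A|) (E : seq A -> Prop) (s : vseq A)
    (Hs : is_vseq s) (HE : large E s) (r : nat) (Hr : 2 <= r)
    (Es : 'I_r -> seq A -> Prop) (HEu : forall w, E w <-> exists i, Es i w) :
  exists (i : 'I_r) (t : vseq A), is_vseq t /\ extracted t s /\ large (Es i) t.
Proof.
case: r Hr Es HEu => [//|r] _ Es HEu.
have E_cover u : E u -> exists2 i, i < r.+1 & Es (inord i) u.
  by case/HEu=> i Es_u; exists i; rewrite ?inord_val.
have [i [t [_ t_v t_s large_t]]] := large_cover Hs HE E_cover.
by exists (inord i), t.
Qed.
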